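(* There exists an absolute constant $C_1<1$ such that the following holds. Let $p$ be a prime, let $n\geq 2$ with $p>2n$, and let $A=\{v_1,\dots,v_n\}$ be a set of $n$ distinct elements of $\mathbb{Z}_p$ which is symmetric, i.e. $-v\in A$ whenever $v\in A$. Let $Y_1,Y_2,Y_3$ be independent random variables, each uniformly distributed on $A$, and set $Y=Y_1+Y_2+Y_3$ (sum in $\mathbb{Z}_p$). Then $$\max_{x\in \mathbb{Z}_p} \mathbb{P}[Y=x]\leq\frac{C_1}{n}.$$
   Context: $\mathbb{Z}_p$ denotes the cyclic group of integers modulo the prime $p$. *)

From HB Require Import structures.
From mathcomp Require Import all_boot all_order all_algebra.
Set Implicit Arguments. Unset Strict Implicit. Unset Printing Implicit Defensive.
Import Order.TTheory GRing.Theory Num.Theory.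
Local Open Scope ring_scope.

(* Z_p for a prime p is represented by 'Z_p (valid since p >= 2). *)

Definition prob_sum3_uniform (p : nat) (A : {set 'Z_p}) (x : 'Z_p) : rat :=
  \sum_(a in A) \sum_(b in A) \sum_(c in A)
     (if a + b + c == x then (#|A|%:R)^-1 * (#|A|%:R)^-1 * (#|A|%:R)^-1
      else 0).

From HB Require Import structures.
From mathcomp Require Import all_boot all_order all_algebra zify lra.
Import Order.TTheory GRing.Theory Num.Theory.

(* Let r(u) be the number of ways to write u as a difference of two elements
   of A, and N the number of triples of A summing to x.  For a, a' in A the
   sets of b with x - a - b in A and with x - a' - b in A meet in at most
   r(a' - a) elements, which gives 2nN <= sum_{a,a' in A} r(a' - a) + n^3.
   The "popular" differences V = {u | r(u) >= 7n/8} satisfy V + V <= W =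
   {u | r(u) >= 3n/4}, and |W| <= 4n/3 < p because sum_u r(u) = n^2, so
   Cauchy-Davenport gives |V| <= 2n/3 + 1/2: most differences are unpopular,
   and 192 N <= 191 n^2. *)

Set Implicit Arguments.
Unset Strict Implicit.
Unset Printing Implicit Defensive.

Local Open Scope ring_scope.

Lemma card_set_in_sum (T : finType) (A : {set T}) (P : pred T) :
  #|[set a in A | P a]| = (\sum_(a in A) P a)%N.
Proof.
rewrite -sum1_card big_mkcond [RHS]big_mkcond; apply: eq_bigr => a _ /=.
by rewrite inE; case: (a \in A); case: (P a).
Qed.

Section Sumset.

Variable G : finZmodType.
Implicit Types (A B : {set G}) (e : G).

Definition sumset A B := [set a + b | a in A, b in B].

Definition dyson_left A B e := A :|: [set b + e | b in B].
Definition dyson_right A B e := [set b in B | b + e \in A].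

Lemma card_dyson A B e :
  (#|dyson_left A B e| + #|dyson_right A B e| = #|A| + #|B|)%N.
Proof.
have AI : A :&: [set b + e | b in B] = [set b + e | b in dyson_right A B e].
  apply/setP => z; rewrite inE; apply/andP/imsetP => [[zA /imsetP [b bB zE]] | [b]].
    by exists b; rewrite // inE bB -zE.
  by rewrite inE => /andP [bB beA] ->; split; last exact: imset_f.
by rewrite -[#|B|](card_imset _ (addIr e)) -(cardsUI A) AI card_imset //; exact: addIr.
Qed.

Lemma sumset_dyson A B e :
  sumset (dyson_left A B e) (dyson_right A B e) \subset sumset A B.
Proof.
rewrite /sumset; apply/subsetP => _ /imset2P [a b aA' bB' ->].
move: bB'; rewrite inE => /andP [bB beA].
case/setUP: aA' => [aA | /imsetP [c cB ->]]; first exact: imset2_f.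
by rewrite -addrA addrC (addrC e); apply: imset2_f.
Qed.

End Sumset.

Section CauchyDavenport.

Variable p : nat.
Hypothesis p_pr : prime p.
Implicit Types (A B : {set 'Z_p}) (d : 'Z_p).

Lemma card_Zp_setT : #|[set: 'Z_p]| = p.
Proof. by rewrite cardsT card_ord Zp_cast // prime_gt1. Qed.

Lemma Zp_unit_neq0 d : d != 0 -> d \is a GRing.unit.
Proof.
move=> nz_d; have p_gt1 := prime_gt1 p_pr.
rewrite -(natr_Zp d) unitZpE // prime_coprime // gtnNdvd //.
  by rewrite lt0n; move: nz_d; rewrite -(inj_eq val_inj).
by rewrite -[p in (_ < p)%N](Zp_cast p_gt1).
Qed.

Lemma translate_closed_setT A d a0 : d != 0 -> a0 \in A ->
  {in A, forall a, a + d \in A} -> A = setT.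
Proof.
move=> nz_d a0A closedA; apply/setP => y; rewrite inE.
have multA k : a0 + d *+ k \in A.
  by elim: k => [|k IHk]; rewrite ?mulr0n ?addr0 // mulrSr addrA closedA.
have -> : y = a0 + d *+ nat_of_ord (d^-1 * (y - a0)).
  by rewrite -mulr_natr natr_Zp mulrA mulrV ?Zp_unit_neq0 // mul1r addrC subrK.
exact: multA.
Qed.

Lemma exists_proper_dyson A B : A != set0 -> (1 < #|B|)%N -> sumset A B != setT ->
  exists e, (dyson_right A B e != set0) && (dyson_right A B e != B).
Proof.
move=> /set0Pn [a0 a0A] /card_gt1P [b1 [b2 [b1B b2B b12]]] nfull.
apply/existsP; apply: contraR nfull; rewrite negb_exists => /forallP none.
have closedA : {in A, forall a, a + (b2 - b1) \in A}.
  move=> a aA; have b1_in : b1 \in dyson_right A B (a - b1).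
    by rewrite inE b1B addrC subrK.
  have := none (a - b1); rewrite negb_and !negbK => /orP [/eqP E | /eqP E].
    by rewrite E inE in b1_in.
  by have := b2B; rewrite -E inE addrCA => /andP [].
have fullA : A = setT by apply: translate_closed_setT a0A closedA; rewrite subr_eq0 eq_sym.
apply/eqP/setP => y; rewrite inE -(subrK b1 y).
by apply: imset2_f; rewrite ?fullA.
Qed.

Theorem cauchy_davenport A B : A != set0 -> B != set0 ->
  (minn p (#|A| + #|B|).-1 <= #|sumset A B|)%N.
Proof.
move: {2}#|B|.+1 (ltnSn #|B|) => k; elim: k A B => // k IHk A B Bk nzA nzB.
have [full | nfull] := eqVneq (sumset A B) setT.
  by rewrite full card_Zp_setT geq_minl.
have [B_le1 | B_gt1] := leqP #|B| 1.
  have /set0Pn [b bB] := nzB.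
  have sub : [set a + b | a in A] \subset sumset A B.
    by apply/subsetP => _ /imsetP [a aA ->]; apply: imset2_f.
  have B1 : #|B| = 1%N by apply/eqP; rewrite eqn_leq B_le1 card_gt0.
  rewrite B1 addn1 /=; apply: leq_trans (geq_minr _ _) _.
  by have := subset_leq_card sub; rewrite card_imset //; exact: addIr.
have [e /andP [nzB' ltB']] := exists_proper_dyson nzA B_gt1 nfull.
have lt_card : (#|dyson_right A B e| < #|B|)%N.
  rewrite proper_card // properEneq ltB'.
  by apply/subsetP => b; rewrite inE => /andP [].
have nzA' : dyson_left A B e != set0.
  by have /set0Pn [a aA] := nzA; apply/set0Pn; exists a; rewrite inE aA.
rewrite -(card_dyson A B e).
apply: leq_trans (IHk _ _ (leq_trans lt_card Bk) nzA' nzB') _.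
exact: subset_leq_card (sumset_dyson A B e).
Qed.

End CauchyDavenport.

Section Representations.

Variables (G : finZmodType) (A : {set G}).
Local Notation n := #|A|.

Definition rdiff (u : G) := #|[set a in A | a - u \in A]|.
Definition rsum (y : G) := #|[set b in A | y - b \in A]|.

Lemma rdiff_le u : (rdiff u <= n)%N.
Proof. by apply: subset_leq_card; apply/subsetP => a; rewrite inE => /andP []. Qed.

Lemma rdiff0 : rdiff 0 = n.
Proof.
rewrite /rdiff (_ : [set a in A | a - 0 \in A] = A) //.
by apply/setP => a; rewrite inE subr0 andbb.
Qed.

Lemma leq_rdiffD u v : (rdiff u + rdiff v <= rdiff (u + v)%R + n)%N.
Proof.
set X := [set a in A | a - u \in A].
set Y := (fun a => a - u) @^-1: [set c in A | c - v \in A].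
have cardY : #|Y| = rdiff v by rewrite card_preimset //; exact: addIr.
have XUY : X :|: Y \subset (fun a => a - u) @^-1: A.
  by rewrite subUset; apply/andP; split; apply/subsetP => a; rewrite !inE => /andP [].
have XIY : X :&: Y \subset [set a in A | a - (u + v) \in A].
  apply/subsetP => a; rewrite !inE => /andP [/andP [aA _] /andP [_]].
  by rewrite aA opprD addrA.
rewrite -cardY -(cardsUI X Y) addnC leq_add ?(subset_leq_card XIY) //.
by rewrite -[n](card_preimset _ (addIr (- u))) subset_leq_card.
Qed.

Lemma sum_rdiff : (\sum_u rdiff u = n * n)%N.
Proof.
rewrite /rdiff; under eq_bigr => u _ do rewrite card_set_in_sum.
rewrite exchange_big /= -sum_nat_const; apply: eq_bigr => a _.
rewrite (reindex_inj (inv_inj (subKr a))) /= -sum1_card [RHS]big_mkcond.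
by apply: eq_bigr => b _; rewrite subKr; case: (b \in A).
Qed.

Lemma leq_rsum_pair y z : (rsum y + rsum z <= rdiff (y - z)%R + n)%N.
Proof.
set Y := [set b in A | y - b \in A].
set Z := [set b in A | z - b \in A].
have YIZ : Y :&: Z \subset (fun b => y - b) @^-1: [set c in A | c - (y - z) \in A].
  apply/subsetP => b; rewrite !inE => /andP [/andP [_ ->] /andP [_]].
  by rewrite opprB [_ + (z - y)]addrC subrKA.
have YUZ : Y :|: Z \subset A.
  by rewrite subUset; apply/andP; split; apply/subsetP => b; rewrite inE => /andP [].
rewrite -(cardsUI Y Z) addnC leq_add ?(subset_leq_card YUZ) //.
by have := subset_leq_card YIZ; rewrite card_preimset //; exact/inv_inj/subKr.
Qed.

End Representations.

Section Counting.

Variables (G : finZmodType) (A : {set G}).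
Local Notation n := #|A|.

Lemma card_rdiff_ge m c :
  (#|[set u | m <= c * rdiff A u]%N| * m <= c * (n * n))%N.
Proof.
set W := [set u | _].
rewrite -sum_rdiff big_distrr /= -sum_nat_const [X in (_ <= X)%N](bigID (mem W)) /=.
by apply: leq_trans (leq_addr _ _); apply: leq_sum => u; rewrite inE.
Qed.

Lemma sum_diff_mem (V : {set G}) a : (\sum_(a' in A) ((a' - a)%R \in V) <= #|V|)%N.
Proof.
rewrite -card_set_in_sum -[#|V|](card_preimset _ (addIr (- a))).
by apply: subset_leq_card; apply/subsetP => b; rewrite !inE => /andP [].
Qed.

Definition pair_rdiff := (\sum_(a in A) \sum_(a' in A) rdiff A (a' - a)%R)%N.

Lemma sum_rsum_le (x : G) :
  (2 * n * \sum_(a in A) rsum A (x - a)%R <= pair_rdiff + n * n * n)%N.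
Proof.
have pair a a' : (rsum A (x - a)%R + rsum A (x - a')%R <= rdiff A (a' - a)%R + n)%N.
  by have := leq_rsum_pair A (x - a) (x - a'); rewrite opprB [x - a + _]addrC subrKA.
have : (\sum_(a in A) \sum_(a' in A) (rsum A (x - a)%R + rsum A (x - a')%R)
        <= \sum_(a in A) \sum_(a' in A) (rdiff A (a' - a)%R + n))%N.
  by apply: leq_sum => a _; apply: leq_sum => a' _; exact: pair.
rewrite /pair_rdiff.
under eq_bigr => a _ do rewrite big_split /= sum_nat_const.
under [X in (_ <= X)%N -> _]eq_bigr => a _ do rewrite big_split /= sum_nat_const.
rewrite !big_split /= !sum_nat_const -big_distrr /=.
lia.
Qed.

Definition popular_diffs := [set u | 7 * n <= 8 * rdiff A u]%N.

Lemma pair_rdiff_le : (8 * pair_rdiff <= 7 * (n * n * n) + n * n * #|popular_diffs|)%N.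
Proof.
have pointwise u : (8 * rdiff A u <= 7 * n + n * (u \in popular_diffs))%N.
  by have := rdiff_le A u; rewrite inE; case: leqP => /=; lia.
have inner a : (8 * \sum_(a' in A) rdiff A (a' - a)%R <= 7 * (n * n) + n * #|popular_diffs|)%N.
  rewrite big_distrr /=.
  apply: (@leq_trans (\sum_(a' in A) (7 * n + n * ((a' - a)%R \in popular_diffs))))%N.
    by apply: leq_sum => a' _; exact: pointwise.
  rewrite big_split /= sum_nat_const -big_distrr /=.
  by rewrite mulnCA leq_add2l leq_mul2l sum_diff_mem orbT.
rewrite /pair_rdiff big_distrr /=.
apply: (@leq_trans (\sum_(a in A) (7 * (n * n) + n * #|popular_diffs|)))%N.
  by apply: leq_sum => a _; exact: inner.
by rewrite sum_nat_const mulnDr mulnCA !mulnA.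
Qed.

Lemma sumset_popular_diffs :
  sumset popular_diffs popular_diffs \subset [set u | 3 * n <= 4 * rdiff A u]%N.
Proof.
apply/subsetP => _ /imset2P [u v + + ->]; rewrite !inE.
(* [set] identifies copies of these terms that differ only in their inferred
   instances and that [lia] would otherwise treat as distinct atoms. *)
move: (leq_rdiffD A u v); set ru := rdiff A u; set rv := rdiff A v.
set ruv := rdiff A (u + v)%R; lia.
Qed.

End Counting.

Lemma triple_count_arith (n N D V : nat) : (1 < n)%N ->
    (2 * n * N <= D + n * n * n)%N ->
    (8 * D <= 7 * (n * n * n) + n * n * V)%N ->
    (6 * V <= 4 * n + 3)%N ->
  (192 * N <= 191 * (n * n))%N.
Proof.
move=> n_gt1 hN hD hV; have hV' := leq_mul (leqnn (n * n)) hV.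
have : (n * (96 * N) <= n * (94 * n * n + 3 * n))%N by lia.
rewrite leq_pmul2l ?(ltnW n_gt1) // => hN'.
by have := leq_mul n_gt1 (leqnn n); lia.
Qed.

Section PrimeCyclic.

Variables (p : nat) (A : {set 'Z_p}).
Hypotheses (p_pr : prime p) (n_gt1 : (1 < #|A|)%N) (p_gt : (2 * #|A| < p)%N).
Local Notation n := #|A|.

Lemma card_popular_diffs : (6 * #|popular_diffs A| <= 4 * n + 3)%N.
Proof.
have n_gt0 : (0 < n)%N := ltnW n_gt1.
set V := popular_diffs A; set W := [set u | 3 * n <= 4 * rdiff A u]%N.
have cardW : (3 * #|W| <= 4 * n)%N.
  have := card_rdiff_ge A (3 * n) 4.
  by rewrite mulnA mulnA leq_pmul2r // mulnC.
have nzV : V != set0 by apply/set0Pn; exists 0; rewrite inE rdiff0; lia.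
have := cauchy_davenport p_pr nzV nzV.
have := subset_leq_card (sumset_popular_diffs A).
move: cardW; set cV := #|V|; set cW := #|W|; set cS := #|sumset V V|; lia.
Qed.

Lemma count_triples_le x : (192 * \sum_(a in A) rsum A (x - a)%R <= 191 * (n * n))%N.
Proof.
exact: triple_count_arith n_gt1 (sum_rsum_le A x) (pair_rdiff_le A) card_popular_diffs.
Qed.

End PrimeCyclic.

Lemma sum_if_addr_eq (G : finZmodType) (V : nmodType) (B : {set G}) (x y : G) (k : V) :
  \sum_(c in B) (if y + c == x then k else 0) = k *+ (x - y \in B).
Proof.
have [xyB | xyNB] := boolP (x - y \in B).
  rewrite (bigD1 (x - y)) //= [y + _]addrC addrNK eqxx big1 ?addr0 // => c /andP [_ ne].
  by case: eqP => // yc; rewrite -yc [y + c]addrC addrK eqxx in ne.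
by rewrite big1 // => c cB; case: eqP => // yc; rewrite -yc [y + c]addrC addrK cB in xyNB.
Qed.

Lemma prob_sum3_uniformE p (A : {set 'Z_p}) x :
  prob_sum3_uniform A x = (\sum_(a in A) rsum A (x - a)%R)%N%:R / #|A|%:R ^+ 3.
Proof.
rewrite mulrC -exprVn !exprS expr0 mulr1 mulrA mulr_natr -sumrMnr.
apply: eq_bigr => a _; rewrite /rsum card_set_in_sum -sumrMnr.
by apply: eq_bigr => b _; rewrite sum_if_addr_eq opprD addrA.
Qed.

Theorem lemma3p1 :
  exists C1 : rat, C1 < 1 /\
    forall (p n : nat) (A : {set 'Z_p}),
      prime p -> (2 <= n)%N -> (2 * n < p)%N -> #|A| = n ->
      (forall v : 'Z_p, v \in A -> - v \in A) ->
      forall x : 'Z_p, prob_sum3_uniform A x <= C1 / n%:R.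
Proof.
exists (191 / 192); split; first by lra.
move=> p n A p_pr n_gt1 p_gt cardA _ x; subst n.
have count := count_triples_le p_pr n_gt1 p_gt x.
have m_gt0 : 0 < #|A|%:R :> rat by rewrite ltr0n ltnW.
rewrite prob_sum3_uniformE ler_pdivrMr; last by rewrite exprn_gt0.
have -> : 191 / 192 / #|A|%:R * #|A|%:R ^+ 3 = 191 / 192 * (#|A| * #|A|)%N%:R :> rat.
  by rewrite natrM -expr2 exprS -mulrA (mulKf (lt0r_neq0 m_gt0)).
move: count; rewrite -(ler_nat rat) natrM [(191 * _)%:R]natrM.
set N := (\sum_(a in A) _)%:R; set K := (_ * _)%:R; lra.
Qed.
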